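(* Let $S$ be a closed densely defined symmetric operator in a separable Hilbert space $\mathfrak H$ with equal nonzero defect numbers. Then $S$ is a Phillips symmetric operator if and only if $\mathfrak N_\lambda\perp\mathfrak N_\nu$ for every $\lambda\in\mathbb C_+$ and every $\nu\in\mathbb C_-$.
   Context: $\mathfrak N_\lambda=\ker(S^*-\lambda I)$ are the defect subspaces of $S$. A boundary triplet of $S^*$ is $(\mathcal H,\Gamma_-,\Gamma_+)$ with $\Gamma_\pm:\mathcal D(S^* )\to\mathcal H$ linear, $(S^*f,g)-(f,S^*g)=i[(\Gamma_+f,\Gamma_+g)-(\Gamma_-f,\Gamma_-g)]$, and $(\Gamma_-,\Gamma_+)$ surjective onto $\mathcal H\oplus\mathcal H$. For $\lambda\in\mathbb C_+$ the characteristic function $\Theta(\lambda)$ is the bounded operator in $\mathcal H$ with $\mathcal D(S)\dotplus\mathfrak N_\lambda=\{f\in\mathcal D(S^* ):\Theta(\lambda)\Gamma_+f=\Gamma_-f\}$. $S$ is a Phillips symmetric operator (PSO) if its characteristic function is constant on $\mathbb C_+$ (independent of the triplet). *)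

From Stdlib Require Import Reals.
Open Scope R_scope.

Record C := mkC { Re : R ; Im : R }.
Definition C0 : C := mkC 0 0.
Definition C1 : C := mkC 1 0.
Definition Ci : C := mkC 0 1.
Definition Cadd (a b : C) : C := mkC (Re a + Re b) (Im a + Im b).
Definition Copp (a : C) : C := mkC (- Re a) (- Im a).
Definition Csub (a b : C) : C := Cadd a (Copp b).
Definition Cmul (a b : C) : C :=
  mkC (Re a * Re b - Im a * Im b) (Re a * Im b + Im a * Re b).
Definition Cconj (a : C) : C := mkC (Re a) (- Im a).

(* ---------- complex Hilbert spaces ----------
   inner product linear in the first argument, antilinear in the second *)
Record Hilbert := {
  hcar :> Type;
  h0 : hcar;
  hadd : hcar -> hcar -> hcar;
  hopp : hcar -> hcar;
  hscal : C -> hcar -> hcar;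
  hinner : hcar -> hcar -> C;
  haddA : forall x y z, hadd x (hadd y z) = hadd (hadd x y) z;
  haddC : forall x y, hadd x y = hadd y x;
  hadd0 : forall x, hadd x h0 = x;
  haddN : forall x, hadd x (hopp x) = h0;
  hscalA : forall a b x, hscal a (hscal b x) = hscal (Cmul a b) x;
  hscal1 : forall x, hscal C1 x = x;
  hscalDr : forall a x y, hscal a (hadd x y) = hadd (hscal a x) (hscal a y);
  hscalDl : forall a b x, hscal (Cadd a b) x = hadd (hscal a x) (hscal b x);
  hinnerDl : forall x y z, hinner (hadd x y) z = Cadd (hinner x z) (hinner y z);
  hinnerZl : forall a x y, hinner (hscal a x) y = Cmul a (hinner x y);
  hinnerC : forall x y, hinner y x = Cconj (hinner x y);
  hinner_ge0 : forall x, 0 <= Re (hinner x x);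
  hinner_eq0 : forall x, hinner x x = C0 -> x = h0;
  hcomplete : forall u : nat -> hcar,
    (forall eps, 0 < eps -> exists N, forall m n, (N <= m)%nat -> (N <= n)%nat ->
        sqrt (Re (hinner (hadd (u m) (hopp (u n))) (hadd (u m) (hopp (u n))))) < eps) ->
    exists l, forall eps, 0 < eps -> exists N, forall n, (N <= n)%nat ->
        sqrt (Re (hinner (hadd (u n) (hopp l)) (hadd (u n) (hopp l)))) < eps
}.

Arguments h0 {h}.
Arguments hadd {h}.
Arguments hopp {h}.
Arguments hscal {h}.
Arguments hinner {h}.

Definition hsub {H : Hilbert} (x y : H) : H := hadd x (hopp y).
Definition hnorm {H : Hilbert} (x : H) : R := sqrt (Re (hinner x x)).

Definition separable (H : Hilbert) : Prop :=
  exists d : nat -> H, forall x eps, 0 < eps -> exists n, hnorm (hsub x (d n)) < eps.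

Definition converges {H : Hilbert} (u : nat -> H) (l : H) : Prop :=
  forall eps, 0 < eps -> exists N, forall n, (N <= n)%nat -> hnorm (hsub (u n) l) < eps.

(* ---------- (unbounded) linear operators: a domain D and an action T ---------- *)
Definition subspace {H : Hilbert} (D : H -> Prop) : Prop :=
  D h0 /\ (forall x y, D x -> D y -> D (hadd x y)) /\
  (forall a x, D x -> D (hscal a x)).

Definition linear_on {H K : Hilbert} (D : H -> Prop) (T : H -> K) : Prop :=
  forall a b x y, D x -> D y ->
    T (hadd (hscal a x) (hscal b y)) = hadd (hscal a (T x)) (hscal b (T y)).

Definition densely_defined {H : Hilbert} (D : H -> Prop) : Prop :=
  forall x eps, 0 < eps -> exists y, D y /\ hnorm (hsub x y) < eps.

Definition is_adjoint {H : Hilbert} (D : H -> Prop) (T : H -> H)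
  (Ds : H -> Prop) (Ts : H -> H) : Prop :=
  (forall g, Ds g <-> exists h, forall f, D f -> hinner (T f) g = hinner f h) /\
  (forall g f, Ds g -> D f -> hinner (T f) g = hinner f (Ts g)).

Definition symmetric {H : Hilbert} (D : H -> Prop) (T : H -> H) : Prop :=
  forall f g, D f -> D g -> hinner (T f) g = hinner f (T g).

Definition closed_op {H : Hilbert} (D : H -> Prop) (T : H -> H) : Prop :=
  forall (u : nat -> H) f g, (forall n, D (u n)) -> converges u f ->
    converges (fun n => T (u n)) g -> D f /\ T f = g.

Definition defect {H : Hilbert} (Ds : H -> Prop) (Ts : H -> H) (l : C) (x : H) : Prop :=
  Ds x /\ Ts x = hscal l x.

(* two closed subspaces have the same Hilbert dimension: they are
   unitarily equivalent (isometric isomorphism between them) *)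
Definition same_dim {H : Hilbert} (A B : H -> Prop) : Prop :=
  exists U : H -> H,
    (forall x, A x -> B (U x)) /\
    (forall y, B y -> exists x, A x /\ U x = y) /\
    linear_on A U /\
    (forall x y, A x -> A y -> hinner (U x) (U y) = hinner x y).

Definition nontrivial {H : Hilbert} (A : H -> Prop) : Prop :=
  exists x, A x /\ x <> h0.

Definition equal_nonzero_defect {H : Hilbert} (Ds : H -> Prop) (Ts : H -> H) : Prop :=
  same_dim (defect Ds Ts Ci) (defect Ds Ts (Copp Ci)) /\
  nontrivial (defect Ds Ts Ci).

Definition boundary_triplet {H : Hilbert} (Ds : H -> Prop) (Ts : H -> H)
  (K : Hilbert) (Gm Gp : H -> K) : Prop :=
  linear_on Ds Gm /\ linear_on Ds Gp /\
  (forall f g, Ds f -> Ds g ->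
     Csub (hinner (Ts f) g) (hinner f (Ts g)) =
     Cmul Ci (Csub (hinner (Gp f) (Gp g)) (hinner (Gm f) (Gm g)))) /\
  (forall a b : K, exists f, Ds f /\ Gm f = a /\ Gp f = b).

Definition bounded_linear {K : Hilbert} (A : K -> K) : Prop :=
  linear_on (fun _ => True) A /\
  exists M, forall x, hnorm (A x) <= M * hnorm x.

Definition char_function {H : Hilbert} (D : H -> Prop) (Ds : H -> Prop) (Ts : H -> H)
  (K : Hilbert) (Gm Gp : H -> K) (Theta : C -> K -> K) : Prop :=
  forall l, 0 < Im l ->
    bounded_linear (Theta l) /\
    forall f, (exists g h, D g /\ defect Ds Ts l h /\ f = hadd g h) <->
              (Ds f /\ Theta l (Gp f) = Gm f).

Definition phillips {H : Hilbert} (D : H -> Prop) (Ds : H -> Prop) (Ts : H -> H) : Prop :=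
  exists (K : Hilbert) (Gm Gp : H -> K) (Theta : C -> K -> K),
    boundary_triplet Ds Ts K Gm Gp /\ char_function D Ds Ts K Gm Gp Theta /\
    forall l m, 0 < Im l -> 0 < Im m -> forall x, Theta l x = Theta m x.

(* Both conditions are equivalent to: D(S) + N_l is the same space for every l in C_+.
   For a Phillips operator this holds because D(S) + N_l = { f : Theta Gamma_+ f = Gamma_- f }.
   If D(S) + N_l does not depend on l, write x in N_l as g + h with g in D(S), h in N_mu;
   for y in N_n one gets (l - conj n) (x, y) = (mu - conj n) (h, y), which vanishes for
   mu = conj n; when l = conj n itself, letting mu -> l forces g -> 0, hence (x, y) = 0.
   Conversely, if every N_l (l in C_+) is orthogonal to every N_n (n in C_-), then in von
   Neumann's decomposition D(S^* ) = D(S) + N_mu + N_(conj mu) the last component of any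
   x in N_l vanishes, so again D(S) + N_l = D(S) + N_mu.  Taking the boundary triplet
   Gamma_- f = sqrt 2 f_-, Gamma_+ f = sqrt 2 U f_+ built from a unitary U : N_i -> N_-i,
   this says that the characteristic function is identically 0. *)

From Stdlib Require Import Reals Lra Psatz Classical ClassicalEpsilon ProofIrrelevance.
Open Scope R_scope.

Lemma Ceq (a b : C) : Re a = Re b -> Im a = Im b -> a = b.
Proof. destruct a, b; simpl; intros -> ->; reflexivity. Qed.

Lemma Ceq_parts (a b : C) : a = b -> Re a = Re b /\ Im a = Im b.
Proof. intros ->; auto. Qed.

Ltac C_ext := apply Ceq; simpl.

Lemma Cmul_eq0 (a w : C) : a <> C0 -> Cmul a w = C0 -> w = C0.
Proof.
  intros Ha E. apply Ceq_parts in E. simpl in E. destruct E as [E1 E2].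
  assert (Hn : Re a * Re a + Im a * Im a <> 0) by (intro Z; apply Ha; C_ext; nra).
  C_ext; apply (Rmult_eq_reg_l (Re a * Re a + Im a * Im a)); auto.
  - transitivity (Re a * (Re a * Re w - Im a * Im w) + Im a * (Re a * Im w + Im a * Re w));
      [ring | rewrite E1, E2; ring].
  - transitivity (Re a * (Re a * Im w + Im a * Re w) - Im a * (Re a * Re w - Im a * Im w));
      [ring | rewrite E1, E2; ring].
Qed.

Lemma Rabs_le_eps_eq0 r K : 0 <= K -> (forall e, 0 < e -> Rabs r <= K * e) -> r = 0.
Proof.
  intros HK Hs. destruct (Req_dec r 0) as [|Hr]; auto.
  apply Rabs_pos_lt in Hr.
  assert (He : 0 < Rabs r / (2 * (K + 1))) by (apply Rdiv_lt_0_compat; lra).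
  specialize (Hs _ He).
  assert (Eq : Rabs r / (2 * (K + 1)) * (2 * (K + 1)) = Rabs r) by (field; lra).
  set (q := Rabs r / (2 * (K + 1))) in *. nra.
Qed.

Lemma C_le_eps_eq0 (z : C) K : 0 <= K ->
  (forall e, 0 < e -> Rabs (Re z) <= K * e /\ Rabs (Im z) <= K * e) -> z = C0.
Proof.
  intros HK Hs. C_ext; apply (Rabs_le_eps_eq0 _ K HK); intros e He; apply (Hs e He).
Qed.

Section InnerProduct.
Variable H : Hilbert.
Implicit Types x y z : H.

Lemma hinner0l y : hinner (@h0 H) y = C0.
Proof.
  assert (E := hinnerDl H h0 h0 y). rewrite hadd0 in E.
  apply Ceq_parts in E; simpl in E; C_ext; lra.
Qed.

Lemma hinnerNl x y : hinner (hopp x) y = Copp (hinner x y).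
Proof.
  assert (E := hinnerDl H x (hopp x) y). rewrite haddN, hinner0l in E.
  apply Ceq_parts in E; simpl in E; C_ext; lra.
Qed.

Lemma hinnerDr x y z : hinner x (hadd y z) = Cadd (hinner x y) (hinner x z).
Proof. rewrite hinnerC, hinnerDl, (hinnerC H x y), (hinnerC H x z). C_ext; lra. Qed.

Lemma hinnerZr a x y : hinner x (hscal a y) = Cmul (Cconj a) (hinner x y).
Proof. rewrite hinnerC, hinnerZl, (hinnerC H x y). C_ext; ring. Qed.

Lemma hinner0r x : hinner x (@h0 H) = C0.
Proof. rewrite hinnerC, hinner0l. C_ext; lra. Qed.

Lemma hinnerNr x y : hinner x (hopp y) = Copp (hinner x y).
Proof. rewrite hinnerC, hinnerNl, (hinnerC H x y). C_ext; lra. Qed.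

Lemma Im_hinner_self x : Im (hinner x x) = 0.
Proof. assert (E := hinnerC H x x). apply Ceq_parts in E; simpl in E; lra. Qed.

Lemma Re_hinnerC x y : Re (hinner y x) = Re (hinner x y).
Proof. rewrite (hinnerC H x y). reflexivity. Qed.

Lemma Im_hinnerC x y : Im (hinner y x) = - Im (hinner x y).
Proof. rewrite (hinnerC H x y). reflexivity. Qed.

Lemma hsub_eq0 x y : hsub x y = h0 -> x = y.
Proof.
  unfold hsub; intro E.
  rewrite <- (hadd0 H x), <- (haddN H y), (haddC H y), haddA, E, haddC, hadd0.
  reflexivity.
Qed.

Lemma hinner_inj_r x y : (forall z, hinner z x = hinner z y) -> x = y.
Proof.
  intro E. apply hsub_eq0, hinner_eq0.
  unfold hsub at 2. rewrite hinnerDr, hinnerNr, E. C_ext; lra.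
Qed.

End InnerProduct.

Ltac inner_expand :=
  unfold hsub in *;
  repeat rewrite ?hinnerDl, ?hinnerDr, ?hinnerZl, ?hinnerZr,
                 ?hinnerNl, ?hinnerNr, ?hinner0l, ?hinner0r.
Ltac inner_expand_in E :=
  unfold hsub in E;
  repeat rewrite ?hinnerDl, ?hinnerDr, ?hinnerZl, ?hinnerZr,
                 ?hinnerNl, ?hinnerNr, ?hinner0l, ?hinner0r in E.

Ltac vec_ring := apply hinner_inj_r; intro; inner_expand; C_ext; ring.

Definition hnorm2 {H : Hilbert} (x : H) : R := Re (hinner x x).

Section Norm.
Variable H : Hilbert.
Implicit Types x y z : H.

Lemma hscal0 x : hscal C0 x = @h0 H.
Proof. vec_ring. Qed.

Lemma hscal_h0 a : hscal a (@h0 H) = @h0 H.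
Proof. vec_ring. Qed.

Lemma hopp_scal x : hopp x = hscal (Copp C1) x.
Proof. vec_ring. Qed.

Lemma hnorm2_ge0 x : 0 <= hnorm2 x.
Proof. apply hinner_ge0. Qed.

Lemma hnorm2_eq0 x : hnorm2 x = 0 -> x = h0.
Proof. intro E. apply hinner_eq0. C_ext; [exact E | apply Im_hinner_self]. Qed.

Lemma hnorm2_add x y : hnorm2 (hadd x y) = hnorm2 x + hnorm2 y + 2 * Re (hinner x y).
Proof. unfold hnorm2. inner_expand. simpl. rewrite (Re_hinnerC _ x y). ring. Qed.

Lemma hnorm2_sub x y : hnorm2 (hsub x y) = hnorm2 x + hnorm2 y - 2 * Re (hinner x y).
Proof. unfold hnorm2. inner_expand. simpl. rewrite (Re_hinnerC _ x y). ring. Qed.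

Lemma hnorm2_scal a x : hnorm2 (hscal a x) = (Re a * Re a + Im a * Im a) * hnorm2 x.
Proof. unfold hnorm2. inner_expand. simpl. rewrite (Im_hinner_self _ x). ring. Qed.

Lemma hnorm2_subC x y : hnorm2 (hsub x y) = hnorm2 (hsub y x).
Proof. rewrite !hnorm2_sub, (Re_hinnerC _ x y). ring. Qed.

Lemma hnorm2_add_le x y : hnorm2 (hadd x y) <= 2 * hnorm2 x + 2 * hnorm2 y.
Proof.
  pose proof (hnorm2_ge0 (hsub x y)) as P. rewrite hnorm2_sub in P. rewrite hnorm2_add. lra.
Qed.

Lemma hnorm_ge0 x : 0 <= hnorm x.
Proof. apply sqrt_pos. Qed.

Lemma hnorm_sqr x : hnorm x * hnorm x = hnorm2 x.
Proof. apply sqrt_sqrt, hnorm2_ge0. Qed.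

Lemma Re_hinner_sqr_le x y : Re (hinner x y) * Re (hinner x y) <= hnorm2 x * hnorm2 y.
Proof.
  destruct (Req_dec (hnorm2 y) 0) as [E|E].
  - apply hnorm2_eq0 in E. subst y. rewrite hinner0r. simpl.
    rewrite Rmult_0_l. apply Rmult_le_pos; apply hnorm2_ge0.
  - set (r := Re (hinner x y)). set (n := hnorm2 y).
    assert (Hn : 0 < n) by (pose proof (hnorm2_ge0 y); unfold n; lra).
    (* expand 0 <= |x - (r/n) y|^2 *)
    pose proof (hnorm2_ge0 (hadd x (hscal (mkC (- r / n) 0) y))) as P.
    rewrite hnorm2_add, hnorm2_scal, hinnerZr in P. simpl in P. fold r n in P.
    assert (P2 : 0 <= (hnorm2 x - r * r / n) * n).
    { apply Rmult_le_pos; [|lra]. eapply Rle_trans; [exact P|]. right. field. lra. }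
    replace ((hnorm2 x - r * r / n) * n) with (hnorm2 x * n - r * r) in P2 by (field; lra).
    lra.
Qed.

Lemma Re_hinner_le x y : Rabs (Re (hinner x y)) <= hnorm x * hnorm y.
Proof.
  unfold hnorm. rewrite <- sqrt_mult by apply hnorm2_ge0.
  rewrite <- sqrt_Rsqr_abs. apply sqrt_le_1_alt. apply Re_hinner_sqr_le.
Qed.

Lemma hnorm_scal_Ci x : hnorm (hscal Ci x) = hnorm x.
Proof. unfold hnorm. fold (hnorm2 (hscal Ci x)). rewrite hnorm2_scal. simpl. f_equal. unfold hnorm2. ring. Qed.

Lemma Im_hinner_le x y : Rabs (Im (hinner x y)) <= hnorm x * hnorm y.
Proof.
  pose proof (Re_hinner_le x (hscal Ci y)) as P.
  rewrite hinnerZr, hnorm_scal_Ci in P. simpl in P.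
  replace (0 * Re (hinner x y) - - (1) * Im (hinner x y)) with (Im (hinner x y)) in P by ring.
  exact P.
Qed.

Lemma hnorm2_sub_le x y : hnorm2 (hsub x y) <= (hnorm x + hnorm y) * (hnorm x + hnorm y).
Proof.
  rewrite hnorm2_sub, <- !hnorm_sqr. pose proof (Re_hinner_le x y).
  pose proof (Rle_abs (- Re (hinner x y))). rewrite Rabs_Ropp in *. nra.
Qed.

Lemma hnorm2_add_tri x y : hnorm2 (hadd x y) <= (hnorm x + hnorm y) * (hnorm x + hnorm y).
Proof.
  rewrite hnorm2_add, <- !hnorm_sqr. pose proof (Re_hinner_le x y).
  pose proof (Rle_abs (Re (hinner x y))). nra.
Qed.

End Norm.

Lemma quadratic_nonneg_eq0 A r : 0 <= A -> (forall t, 0 <= t * t * A - 2 * t * r) -> r = 0.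
Proof.
  intros HA Ht. specialize (Ht (r / (A + 1))).
  assert (E : r / (A + 1) * (A + 1) = r) by (field; lra).
  set (t := r / (A + 1)) in *.
  replace (t * t * A - 2 * t * r) with (- (t * t) * (A + 2)) in Ht by (rewrite <- E; ring).
  assert (t = 0) by nra. rewrite <- E. subst t. nra.
Qed.

Lemma Rle_of_le_eps a b K : 0 <= K -> (forall d, 0 < d < 1 -> a <= b + K * d) -> a <= b.
Proof.
  intros HK Hs. destruct (Rle_dec a b) as [|N]; auto. apply Rnot_le_lt in N.
  set (d := Rmin (1/2) ((a - b) / (2 * (K + 1)))).
  assert (d1 : d <= 1/2) by apply Rmin_l.
  assert (d2 : d <= (a - b) / (2 * (K + 1))) by apply Rmin_r.
  assert (d3 : 0 < d) by (apply Rmin_glb_lt; [lra | apply Rdiv_lt_0_compat; lra]).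
  specialize (Hs d ltac:(lra)).
  assert (E : (a - b) / (2 * (K + 1)) * (2 * (K + 1)) = a - b) by (field; lra).
  set (q := (a - b) / (2 * (K + 1))) in *.
  assert (K * d <= K * q) by (apply Rmult_le_compat_l; lra).
  nra.
Qed.

Lemma inv_INR_small e : 0 < e -> exists N, forall n, (N <= n)%nat -> / (INR n + 1) < e.
Proof.
  intro He. destruct (archimed_cor1 e He) as [N [HN HN0]]. exists N. intros n Hn.
  apply le_INR in Hn. apply lt_INR in HN0. simpl in HN0.
  eapply Rle_lt_trans; [|exact HN]. apply Rinv_le_contravar; lra.
Qed.

Lemma inf_approx {A : Type} (P : A -> Prop) (f : A -> R) :
  (exists a, P a) -> (forall a, P a -> 0 <= f a) ->
  exists d, 0 <= d /\ (forall a, P a -> d <= f a) /\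
            forall e, 0 < e -> exists a, P a /\ f a < d + e.
Proof.
  intros [a0 Pa0] Hpos.
  set (E := fun r => exists a, P a /\ r = - f a).
  assert (Hb : bound E) by (exists 0; intros r [a [Pa ->]]; specialize (Hpos a Pa); lra).
  destruct (completeness E Hb (ex_intro _ _ (ex_intro _ a0 (conj Pa0 eq_refl))))
    as [s [Hub Hlub]].
  exists (- s). split; [|split].
  - assert (s <= 0); [|lra]. apply Hlub. intros r [a [Pa ->]]. specialize (Hpos a Pa). lra.
  - intros a Pa. assert (Ea : E (- f a)) by (exists a; auto). apply Hub in Ea. lra.
  - intros e He. apply NNPP. intro Hn.
    assert (s <= s - e); [|lra].
    apply Hlub. intros r [a [Pa ->]].
    destruct (Rlt_dec (f a) (- s + e)); [exfalso; apply Hn; exists a; auto | lra].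
Qed.

Lemma sqrt_lt_of_sqr_lt a e : 0 <= a -> 0 < e -> a < e * e -> sqrt a < e.
Proof. intros Ha He Hlt. rewrite <- (sqrt_square e) by lra. apply sqrt_lt_1; nra. Qed.

Lemma sqr_lt_of_sqrt_lt a e : 0 <= a -> sqrt a < e -> a < e * e.
Proof. intros Ha Hs. pose proof (sqrt_pos a). rewrite <- (sqrt_sqrt a Ha). nra. Qed.

Section Projection.
Variable H : Hilbert.
Implicit Types x y z : H.

Lemma convergesP (u : nat -> H) l : converges u l <->
  forall e, 0 < e -> exists N, forall n, (N <= n)%nat -> hnorm2 (hsub (u n) l) < e.
Proof.
  split.
  - intros Hc e He. destruct (Hc (sqrt e) (sqrt_lt_R0 _ He)) as [N HN].
    exists N. intros n Hn. specialize (HN n Hn).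
    apply sqr_lt_of_sqrt_lt in HN; [|apply hnorm2_ge0]. rewrite sqrt_sqrt in HN by lra. exact HN.
  - intros Hc e He. destruct (Hc (e * e) ltac:(nra)) as [N HN].
    exists N. intros n Hn. apply sqrt_lt_of_sqr_lt; [apply hnorm2_ge0 | exact He | now apply HN].
Qed.

Lemma cauchy_complete (u : nat -> H) :
  (forall e, 0 < e -> exists N, forall m n, (N <= m)%nat -> (N <= n)%nat ->
     hnorm2 (hsub (u m) (u n)) < e) ->
  exists l, converges u l.
Proof.
  intro Hu. apply hcomplete. intros eps He.
  destruct (Hu (eps * eps) ltac:(nra)) as [N HN]. exists N. intros m n Hm Hn.
  apply sqrt_lt_of_sqr_lt; [apply hnorm2_ge0 | exact He | now apply HN].
Qed.

Definition closed_set (M : H -> Prop) : Prop :=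
  forall (u : nat -> H) l, (forall n, M (u n)) -> converges u l -> M l.

Lemma parallelogram x a b : hnorm2 (hsub a b) =
  2 * hnorm2 (hsub x a) + 2 * hnorm2 (hsub x b)
  - 4 * hnorm2 (hsub x (hscal (mkC (1/2) 0) (hadd a b))).
Proof.
  unfold hnorm2. inner_expand. simpl.
  rewrite (Re_hinnerC _ x a), (Re_hinnerC _ x b), (Re_hinnerC _ a b). lra.
Qed.

Lemma best_approximation M : subspace M -> closed_set M ->
  forall x, exists m, M m /\ forall y, M y -> hnorm2 (hsub x m) <= hnorm2 (hsub x y).
Proof.
  intros [M0 [Madd Mscal]] Mcl x.
  destruct (inf_approx M (fun m => hnorm2 (hsub x m)) (ex_intro _ _ M0)
              (fun m _ => hnorm2_ge0 _ _)) as [d [Hd0 [Hlow Happ]]].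
  assert (Hseq : forall n : nat, exists m, M m /\ hnorm2 (hsub x m) < d + / (INR n + 1)).
  { intro n. apply Happ, Rinv_0_lt_compat. pose proof (pos_INR n). lra. }
  destruct (choice _ Hseq) as [ms Hms].
  assert (Hcauchy : exists l, converges ms l).
  { apply cauchy_complete. intros e He.
    destruct (inv_INR_small (e / 4)) as [N HN]; [lra|].
    exists N. intros i j Hi Hj. rewrite (parallelogram x).
    destruct (Hms i) as [Mi Li], (Hms j) as [Mj Lj].
    pose proof (Hlow _ (Mscal (mkC (1/2) 0) _ (Madd _ _ Mi Mj))).
    pose proof (HN i Hi). pose proof (HN j Hj). lra. }
  destruct Hcauchy as [l Hl].
  exists l. split; [apply (Mcl ms); auto; intro n; apply (Hms n)|].
  intros y My. apply Rle_trans with d; [|apply Hlow; auto].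
  (* |x - l| <= |x - ms n| + |ms n - l| with both terms controlled *)
  apply (Rle_of_le_eps _ _ (3 + 2 * (1 + d))); [lra|].
  intros del Hdel.
  destruct (inv_INR_small del ltac:(lra)) as [N1 HN1].
  destruct (Hl del ltac:(lra)) as [N2 HN2].
  set (n := Nat.max N1 N2).
  specialize (HN1 n (Nat.le_max_l _ _)). specialize (HN2 n (Nat.le_max_r _ _)).
  destruct (Hms n) as [_ Ln].
  replace (hsub x l) with (hadd (hsub x (ms n)) (hsub (ms n) l)) by vec_ring.
  eapply Rle_trans; [apply hnorm2_add_tri|].
  pose proof (hnorm_sqr _ (hsub x (ms n))). pose proof (hnorm_ge0 _ (hsub x (ms n))).
  pose proof (hnorm_ge0 _ (hsub (ms n) l)).
  set (a := hnorm (hsub x (ms n))) in *. set (b := hnorm (hsub (ms n) l)) in *.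
  assert (a * a < d + del) by lra.
  assert (a <= 1 + d) by nra.
  nra.
Qed.

Lemma hnorm2_shift x l y t : hnorm2 (hsub x (hadd l (hscal (mkC t 0) y))) =
  hnorm2 (hsub x l) + t * t * hnorm2 y - 2 * t * Re (hinner (hsub x l) y).
Proof.
  unfold hnorm2. inner_expand. simpl.
  rewrite (Re_hinnerC _ x l), (Re_hinnerC _ x y), (Re_hinnerC _ l y), (Im_hinner_self _ y). ring.
Qed.

Lemma best_approximation_orthogonal M x m : subspace M -> M m ->
  (forall y, M y -> hnorm2 (hsub x m) <= hnorm2 (hsub x y)) ->
  forall y, M y -> hinner y (hsub x m) = C0.
Proof.
  intros [_ [Madd Mscal]] Mm Hmin y My.
  (* first variation of t |-> |x - (m + t w)|^2 at t = 0 *)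
  assert (Hq : forall w, M w -> Re (hinner (hsub x m) w) = 0).
  { intros w Mw. apply (quadratic_nonneg_eq0 (hnorm2 w)); [apply hnorm2_ge0|]. intro t.
    pose proof (Hmin _ (Madd _ _ Mm (Mscal (mkC t 0) _ Mw))) as P.
    rewrite hnorm2_shift in P. lra. }
  pose proof (Hq y My) as R1. pose proof (Hq _ (Mscal Ci _ My)) as R2.
  rewrite hinnerZr in R2. simpl in R2.
  rewrite hinnerC. C_ext; lra.
Qed.

Lemma orthogonal_projection M : subspace M -> closed_set M ->
  forall x, exists m, M m /\ forall y, M y -> hinner y (hsub x m) = C0.
Proof.
  intros HM Mcl x. destruct (best_approximation M HM Mcl x) as [m [Mm Hmin]].
  exists m. split; auto. exact (best_approximation_orthogonal M x m HM Mm Hmin).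
Qed.

End Projection.

Section Convergence.
Variable H : Hilbert.

Lemma converges_ext (u v : nat -> H) l : (forall n, u n = v n) -> converges u l -> converges v l.
Proof. intros E Hc e He. destruct (Hc e He) as [N HN]. exists N. intros n Hn. rewrite <- E. auto. Qed.

Lemma converges_add (u v : nat -> H) a b : converges u a -> converges v b ->
  converges (fun n => hadd (u n) (v n)) (hadd a b).
Proof.
  rewrite !convergesP. intros Hu Hv e He.
  destruct (Hu (e / 4) ltac:(lra)) as [N1 HN1], (Hv (e / 4) ltac:(lra)) as [N2 HN2].
  exists (Nat.max N1 N2). intros n Hn.
  replace (hsub (hadd (u n) (v n)) (hadd a b)) with (hadd (hsub (u n) a) (hsub (v n) b))
    by vec_ring.
  eapply Rle_lt_trans; [apply hnorm2_add_le|].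
  specialize (HN1 n ltac:(lia)). specialize (HN2 n ltac:(lia)). lra.
Qed.

Lemma converges_scal (u : nat -> H) c a : converges u a ->
  converges (fun n => hscal c (u n)) (hscal c a).
Proof.
  rewrite !convergesP. intros Hu e He.
  set (k := Re c * Re c + Im c * Im c).
  assert (Hk : 0 < k + 1) by (unfold k; nra).
  destruct (Hu (e / (k + 1))) as [N HN]; [apply Rdiv_lt_0_compat; lra|].
  exists N. intros n Hn.
  replace (hsub (hscal c (u n)) (hscal c a)) with (hscal c (hsub (u n) a)) by vec_ring.
  rewrite hnorm2_scal. fold k. specialize (HN n Hn).
  pose proof (hnorm2_ge0 _ (hsub (u n) a)).
  assert (E : e / (k + 1) * (k + 1) = e) by (field; lra).
  assert (0 <= k) by (unfold k; nra).
  set (q := e / (k + 1)) in *. nra.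
Qed.

Lemma converges_cauchy (u : nat -> H) l : converges u l ->
  forall e, 0 < e -> exists N, forall m n, (N <= m)%nat -> (N <= n)%nat ->
    hnorm2 (hsub (u m) (u n)) < e.
Proof.
  rewrite convergesP. intros Hu e He. destruct (Hu (e / 4) ltac:(lra)) as [N HN].
  exists N. intros m n Hm Hn.
  replace (hsub (u m) (u n)) with (hadd (hsub (u m) l) (hsub l (u n))) by vec_ring.
  eapply Rle_lt_trans; [apply hnorm2_add_le|].
  rewrite (hnorm2_subC _ l (u n)). pose proof (HN m Hm). pose proof (HN n Hn). lra.
Qed.

End Convergence.

Section SubspaceHilbert.
Variable H : Hilbert.
Variable P : H -> Prop.
Hypothesis HP : subspace P.
Hypothesis Pcl : closed_set H P.

Lemma sig_eqP (x y : sig P) : proj1_sig x = proj1_sig y -> x = y.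
Proof. destruct x, y; simpl; intros ->. f_equal. apply proof_irrelevance. Qed.

Lemma subspace0 : P h0.
Proof. apply HP. Qed.

Lemma subspace_add x y : P x -> P y -> P (hadd x y).
Proof. apply HP. Qed.

Lemma subspace_scal a x : P x -> P (hscal a x).
Proof. apply HP. Qed.

Lemma subspace_opp x : P x -> P (hopp x).
Proof. rewrite hopp_scal. apply subspace_scal. Qed.

Definition sub_add (x y : sig P) : sig P :=
  exist _ _ (subspace_add _ _ (proj2_sig x) (proj2_sig y)).
Definition sub_opp (x : sig P) : sig P := exist _ _ (subspace_opp _ (proj2_sig x)).
Definition sub_scal a (x : sig P) : sig P := exist _ _ (subspace_scal a _ (proj2_sig x)).
Definition sub_inner (x y : sig P) : C := hinner (proj1_sig x) (proj1_sig y).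

Lemma sub_complete (u : nat -> sig P) :
  (forall eps, 0 < eps -> exists N, forall m n, (N <= m)%nat -> (N <= n)%nat ->
     sqrt (Re (sub_inner (sub_add (u m) (sub_opp (u n))) (sub_add (u m) (sub_opp (u n))))) < eps) ->
  exists l, forall eps, 0 < eps -> exists N, forall n, (N <= n)%nat ->
     sqrt (Re (sub_inner (sub_add (u n) (sub_opp l)) (sub_add (u n) (sub_opp l)))) < eps.
Proof.
  intros Hu. destruct (hcomplete H (fun n => proj1_sig (u n)) Hu) as [l Hl].
  exists (exist _ l (Pcl (fun n => proj1_sig (u n)) l (fun n => proj2_sig (u n)) Hl)).
  exact Hl.
Qed.

Definition subspace_hilbert : Hilbert.
Proof.
  refine (Build_Hilbert (sig P) (exist _ _ subspace0) sub_add sub_opp sub_scal sub_inner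
            _ _ _ _ _ _ _ _ _ _ _ _ _ sub_complete);
    try (intros; apply sig_eqP; simpl;
         first [apply haddA | apply haddC | apply hadd0 | apply haddN | apply hscalA
               | apply hscal1 | apply hscalDr | apply hscalDl]);
    intros; unfold sub_inner; simpl;
    first [apply hinnerDl | apply hinnerZl | apply hinnerC | apply hinner_ge0 | idtac].
  apply sig_eqP, hinner_eq0. assumption.
Defined.

End SubspaceHilbert.

Section Operator.
Variables (H : Hilbert) (D : H -> Prop) (T : H -> H) (Ds : H -> Prop) (Ts : H -> H).
Hypothesis HD : subspace D.
Hypothesis HT : linear_on D T.
Hypothesis Hdense : densely_defined D.
Hypothesis Hclosed : closed_op D T.
Hypothesis Hsym : symmetric D T.
Hypothesis Hadj : is_adjoint D T Ds Ts.
Implicit Types x y z f g h : H.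

(* [N_mu] described through [S] alone, without reference to [S^*]. *)
Definition Ndef (mu : C) x : Prop := forall f, D f -> hinner (T f) x = hinner f (hscal mu x).

Lemma Dsub x y : D x -> D y -> D (hsub x y).
Proof. intros. apply (subspace_add _ _ HD); auto. apply (subspace_opp _ _ HD); auto. Qed.

Lemma T_add x y : D x -> D y -> T (hadd x y) = hadd (T x) (T y).
Proof.
  intros Dx Dy. rewrite <- (hscal1 _ x), <- (hscal1 _ y), HT by auto. rewrite !hscal1. reflexivity.
Qed.

Lemma T_scal a x : D x -> T (hscal a x) = hscal a (T x).
Proof.
  intros Dx. pose proof (HT a C0 x h0 Dx (subspace0 _ _ HD)) as E.
  rewrite !hscal0, !hadd0 in E. exact E.
Qed.

Lemma T_sub x y : D x -> D y -> T (hsub x y) = hsub (T x) (T y).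
Proof.
  intros Dx Dy. unfold hsub. rewrite hopp_scal, T_add, T_scal, <- hopp_scal; auto.
  apply (subspace_scal _ _ HD); auto.
Qed.

Lemma dense_orth_eq0 z : (forall f, D f -> hinner f z = C0) -> z = h0.
Proof.
  intro Hz. apply hnorm2_eq0, (Rabs_le_eps_eq0 _ (hnorm z)); [apply hnorm_ge0|].
  intros e He. destruct (Hdense z e He) as [f [Df Hf]].
  replace (hnorm2 z) with (Re (hinner (hsub z f) z))
    by (unfold hnorm2; inner_expand; rewrite (Hz f Df); simpl; ring).
  eapply Rle_trans; [apply Re_hinner_le|].
  rewrite Rmult_comm. apply Rmult_le_compat_l; [apply hnorm_ge0 | lra].
Qed.

Lemma adjointP g h : (forall f, D f -> hinner (T f) g = hinner f h) -> Ds g /\ Ts g = h.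
Proof.
  intro Hg. destruct Hadj as [A1 A2].
  assert (Dg : Ds g) by (apply A1; exists h; exact Hg).
  split; auto. apply hsub_eq0, dense_orth_eq0. intros f Df.
  inner_expand. rewrite <- (A2 g f Dg Df), (Hg f Df). C_ext; ring.
Qed.

Lemma Ndef_defect mu x : Ndef mu x <-> defect Ds Ts mu x.
Proof.
  split.
  - intro Hx. apply adjointP. exact Hx.
  - intros [Dx Tx] f Df. rewrite <- Tx. apply (proj2 Hadj); auto.
Qed.

Lemma Ndef_subspace mu : subspace (Ndef mu).
Proof.
  split; [|split].
  - intros f Df. rewrite hscal_h0, !hinner0r. reflexivity.
  - intros x y Hx Hy f Df. inner_expand. rewrite (Hx f Df), (Hy f Df). inner_expand. C_ext; ring.
  - intros a x Hx f Df. inner_expand. rewrite (Hx f Df). inner_expand. C_ext; ring.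
Qed.

Lemma Ndef_closed mu : closed_set H (Ndef mu).
Proof.
  intros u x Hu Hc f Df.
  set (w := hsub (T f) (hscal (Cconj mu) f)).
  (* [w] is orthogonal to every [u n], hence to their limit *)
  assert (Ew : forall v, hinner w v = Csub (hinner (T f) v) (hinner f (hscal mu v)))
    by (intro v; unfold w; inner_expand; unfold Csub; C_ext; ring).
  assert (Z : hinner w x = C0).
  { apply (C_le_eps_eq0 _ (hnorm w)); [apply hnorm_ge0|]. intros e He.
    destruct (Hc e He) as [N HN]. specialize (HN N (le_n N)).
    replace (hinner w x) with (Copp (hinner w (hsub (u N) x))).
    2: { inner_expand. rewrite Ew, (Hu N f Df). unfold Csub. C_ext; ring. }
    simpl. rewrite !Rabs_Ropp. pose proof (hnorm_ge0 _ w).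
    split; (eapply Rle_trans; [apply Re_hinner_le || apply Im_hinner_le|]);
      apply Rmult_le_compat_l; lra. }
  rewrite Ew in Z. unfold Csub in Z. apply Ceq_parts in Z. simpl in Z. C_ext; lra.
Qed.

Lemma adjoint_sum f0 h1 h2 mu1 mu2 : D f0 -> Ndef mu1 h1 -> Ndef mu2 h2 ->
  Ds (hadd (hadd f0 h1) h2) /\
  Ts (hadd (hadd f0 h1) h2) = hadd (hadd (T f0) (hscal mu1 h1)) (hscal mu2 h2).
Proof.
  intros Df0 N1 N2. apply adjointP. intros f Df. inner_expand.
  rewrite (N1 f Df), (N2 f Df), (Hsym f f0 Df Df0). inner_expand. C_ext; ring.
Qed.

Lemma adjoint_sum2 g h mu : D g -> Ndef mu h ->
  Ds (hadd g h) /\ Ts (hadd g h) = hadd (T g) (hscal mu h).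
Proof.
  intros Dg Nh. destruct (adjoint_sum g h h0 mu C0 Dg Nh (subspace0 _ _ (Ndef_subspace C0))).
  rewrite !hadd0, hscal_h0, hadd0 in *. auto.
Qed.

Lemma shift_lower_bound g mu : D g ->
  Im mu * Im mu * hnorm2 g <= hnorm2 (hsub (T g) (hscal mu g)).
Proof.
  intro Dg. rewrite hnorm2_sub, hnorm2_scal, hinnerZr. simpl.
  assert (I0 : Im (hinner (T g) g) = 0).
  { assert (E := Hsym g g Dg Dg). rewrite (hinnerC _ (T g) g) in E.
    apply Ceq_parts in E. simpl in E. lra. }
  rewrite I0. pose proof (Re_hinner_sqr_le _ (T g) g) as P.
  pose proof (hnorm2_ge0 _ g). pose proof (hnorm2_ge0 _ (T g)).
  set (s := Re (hinner (T g) g)) in *. set (n := hnorm2 g) in *. set (A := hnorm2 (T g)) in *.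
  set (m := Re mu). set (k := Im mu).
  (* the Re mu part is a square: (A + m^2 n - 2 m s) n = (A n - s^2) + (s - m n)^2 *)
  assert (0 <= A + m * m * n - 2 * m * s); [|nra].
  destruct (Req_dec n 0) as [E|E].
  - rewrite E in *. assert (s = 0) by nra. subst s. nra.
  - apply (Rmult_le_reg_r n); [lra|].
    replace ((A + m * m * n - 2 * m * s) * n) with (A * n - s * s + (s - m * n) * (s - m * n))
      by ring. pose proof (Rle_0_sqr (s - m * n)). unfold Rsqr in *. lra.
Qed.

Definition shift_range (mu : C) y : Prop := exists f, D f /\ y = hsub (T f) (hscal mu f).

Lemma shift_range_subspace mu : subspace (shift_range mu).
Proof.
  pose proof (subspace0 _ _ HD) as D0.
  split; [|split].
  - exists h0. split; auto. rewrite <- (hscal0 _ h0) at 2. rewrite T_scal by auto. vec_ring.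
  - intros x y [f [Df ->]] [g [Dg ->]]. exists (hadd f g).
    split; [apply (subspace_add _ _ HD); auto|]. rewrite T_add by auto. vec_ring.
  - intros a x [f [Df ->]]. exists (hscal a f).
    split; [apply (subspace_scal _ _ HD); auto|]. rewrite T_scal by auto. vec_ring.
Qed.

Lemma shift_range_closed mu : Im mu <> 0 -> closed_set H (shift_range mu).
Proof.
  intros Hk u y Hu Hc.
  destruct (choice (fun n f => D f /\ u n = hsub (T f) (hscal mu f)) Hu) as [fs Hfs].
  set (k2 := Im mu * Im mu). assert (Hk2 : 0 < k2) by (unfold k2; nra).
  assert (Cf : exists f, converges fs f).
  { apply cauchy_complete. intros e He.
    destruct (converges_cauchy _ u y Hc (k2 * e)) as [N HN]; [nra|].
    exists N. intros m n Hm Hn. destruct (Hfs m) as [Dm Em], (Hfs n) as [Dn En].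
    pose proof (shift_lower_bound (hsub (fs m) (fs n)) mu (Dsub _ _ Dm Dn)) as L.
    replace (hsub (T (hsub (fs m) (fs n))) (hscal mu (hsub (fs m) (fs n))))
      with (hsub (u m) (u n)) in L by (rewrite T_sub, Em, En by auto; vec_ring).
    specialize (HN m n Hm Hn). fold k2 in L.
    apply (Rmult_lt_reg_l k2); lra. }
  destruct Cf as [f Cf].
  assert (CT : converges (fun n => T (fs n)) (hadd y (hscal mu f))).
  { apply (converges_ext _ (fun n => hadd (u n) (hscal mu (fs n)))).
    - intro n. destruct (Hfs n) as [_ ->]. vec_ring.
    - apply converges_add; [exact Hc | apply converges_scal, Cf]. }
  destruct (Hclosed fs f _ (fun n => proj1 (Hfs n)) Cf CT) as [Df Tf].
  exists f. split; auto. rewrite Tf. vec_ring.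
Qed.

Lemma von_neumann_decomposition mu f : 0 < Im mu -> Ds f ->
  exists g h1 h2, D g /\ Ndef mu h1 /\ Ndef (Cconj mu) h2 /\ f = hadd (hadd g h1) h2.
Proof.
  intros Hm Df.
  destruct (orthogonal_projection H (shift_range mu) (shift_range_subspace mu)
              (shift_range_closed mu ltac:(lra)) (hsub (Ts f) (hscal mu f)))
    as [m [[f0 [Df0 ->]] Hw]].
  (* the residual [w] of (S^* - mu) f is orthogonal to ran (S - mu), i.e. lies in N_(conj mu) *)
  set (w := hsub (hsub (Ts f) (hscal mu f)) (hsub (T f0) (hscal mu f0))) in *.
  assert (Nw : Ndef (Cconj mu) w).
  { intros g Dg. specialize (Hw _ (ex_intro _ g (conj Dg eq_refl))).
    inner_expand. inner_expand_in Hw. apply Ceq_parts in Hw. simpl in Hw. C_ext; lra. }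
  set (h2 := hscal (mkC 0 (/ (2 * Im mu))) w).
  exists f0, (hsub (hsub f f0) h2), h2.
  split; [auto | split; [|split]].
  - intros p Dp.
    assert (A1 : hinner (T p) f = hinner p (Ts f)) by (apply (proj2 Hadj); auto).
    assert (A2 : hinner (T p) f0 = hinner p (T f0)) by (apply Hsym; auto).
    assert (A3 : hinner (T p) h2 = hinner p (hscal (Cconj mu) h2))
      by (apply (subspace_scal _ _ (Ndef_subspace _)); auto).
    assert (B : hinner p h2 = Cmul (mkC 0 (- / (2 * Im mu)))
               (Cadd (Cadd (hinner p (Ts f)) (Copp (Cmul (Cconj mu) (hinner p f))))
                     (Cadd (Copp (hinner p (T f0))) (Cmul (Cconj mu) (hinner p f0)))))
      by (unfold h2, w; inner_expand; C_ext; ring).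
    inner_expand. rewrite A1, A2, A3. inner_expand. rewrite B. C_ext; field; lra.
  - apply (subspace_scal _ _ (Ndef_subspace _)). exact Nw.
  - vec_ring.
Qed.

Lemma Cconj_involutive a : Cconj (Cconj a) = a.
Proof. C_ext; ring. Qed.

(* Pairing S^* x = T g + mu a + conj(mu) b with b gives (conj mu - mu) |b|^2 = 0. *)
Lemma defect_component_eq0 nu mu x g a b : Im mu <> 0 ->
  Ndef nu x -> D g -> Ndef mu a -> Ndef (Cconj mu) b ->
  x = hadd (hadd g a) b -> hinner x b = C0 -> b = h0.
Proof.
  intros Hk Nx Dg Na Nb Ex Z.
  destruct (proj1 (Ndef_defect nu x) Nx) as [_ Tx].
  destruct (adjoint_sum g a b _ _ Dg Na Nb) as [_ Et]. rewrite <- Ex, Tx in Et.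
  assert (Ea := f_equal (fun v => hinner v b) Et). simpl in Ea.
  inner_expand_in Ea. rewrite Z, (Nb g Dg) in Ea. inner_expand_in Ea.
  assert (Eb : hinner x b = Cadd (Cadd (hinner g b) (hinner a b)) (hinner b b))
    by (rewrite Ex; inner_expand; reflexivity).
  rewrite Z in Eb.
  apply hinner_eq0, (Cmul_eq0 (mkC 0 (2 * Im mu))).
  - intro W. apply Ceq_parts in W. simpl in W. lra.
  - apply Ceq_parts in Ea, Eb. simpl in Ea, Eb. C_ext; nra.
Qed.

Lemma von_neumann_unique mu g p m g' p' m' : Im mu <> 0 ->
  D g -> D g' -> Ndef mu p -> Ndef mu p' -> Ndef (Cconj mu) m -> Ndef (Cconj mu) m' ->
  hadd (hadd g p) m = hadd (hadd g' p') m' -> p = p' /\ m = m'.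
Proof.
  intros Hk Dg Dg' Np Np' Nm Nm' E.
  pose proof (subspace0 _ _ (Ndef_subspace C0)) as N0.
  assert (Nsub : forall nu a b, Ndef nu a -> Ndef nu b -> Ndef nu (hsub a b)).
  { intros nu a b Na Nb. apply (subspace_add _ _ (Ndef_subspace _)); auto.
    apply (subspace_opp _ _ (Ndef_subspace _)); auto. }
  assert (DG : D (hsub g g')) by (apply Dsub; auto).
  assert (NP := Nsub _ _ _ Np Np'). assert (NM := Nsub _ _ _ Nm Nm').
  assert (Esum : hadd (hadd (hsub g g') (hsub p p')) (hsub m m') = h0).
  { apply hinner_inj_r. intro q. assert (Eq := f_equal (hinner q) E).
    inner_expand_in Eq. apply Ceq_parts in Eq. simpl in Eq. inner_expand. C_ext; lra. }
  assert (EM : hsub m m' = h0).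
  { apply (defect_component_eq0 C0 mu h0 _ _ _ Hk N0 DG NP NM (eq_sym Esum)).
    apply hinner0l. }
  assert (EP : hsub p p' = h0).
  { rewrite <- (Cconj_involutive mu) in NP.
    apply (defect_component_eq0 C0 (Cconj mu) h0 _ _ _ ltac:(simpl; lra) N0 DG NM NP).
    - rewrite <- Esum. vec_ring.
    - apply hinner0l. }
  split; apply hsub_eq0; assumption.
Qed.

Lemma green_formula f0 fp fm g0 gp gm : D f0 -> Ndef Ci fp -> Ndef (Copp Ci) fm ->
  D g0 -> Ndef Ci gp -> Ndef (Copp Ci) gm ->
  Csub (hinner (Ts (hadd (hadd f0 fp) fm)) (hadd (hadd g0 gp) gm))
       (hinner (hadd (hadd f0 fp) fm) (Ts (hadd (hadd g0 gp) gm))) =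
  Cmul (mkC 0 2) (Csub (hinner fp gp) (hinner fm gm)).
Proof.
  intros Df0 Nfp Nfm Dg0 Ngp Ngm.
  rewrite (proj2 (adjoint_sum f0 fp fm _ _ Df0 Nfp Nfm)),
          (proj2 (adjoint_sum g0 gp gm _ _ Dg0 Ngp Ngm)).
  inner_expand.
  rewrite (Hsym f0 g0 Df0 Dg0), (Ngp f0 Df0), (Ngm f0 Df0).
  rewrite (hinnerC _ (T g0) fp), (hinnerC _ (T g0) fm), (Nfp g0 Dg0), (Nfm g0 Dg0).
  inner_expand. unfold Csub. C_ext;
  rewrite ?(Re_hinnerC _ f0 gp), ?(Re_hinnerC _ f0 gm), ?(Re_hinnerC _ g0 fp),
          ?(Re_hinnerC _ g0 fm), ?(Re_hinnerC _ f0 g0),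
          ?(Im_hinnerC _ f0 gp), ?(Im_hinnerC _ f0 gm), ?(Im_hinnerC _ g0 fp),
          ?(Im_hinnerC _ g0 fm), ?(Im_hinnerC _ f0 g0); lra.
Qed.

Lemma defect_inner_shift l n mu x y g h : Ndef l x -> Ndef n y -> D g -> Ndef mu h ->
  x = hadd g h -> Cmul (Csub l (Cconj n)) (hinner x y) = Cmul (Csub mu (Cconj n)) (hinner h y).
Proof.
  intros Nx Ny Dg Nh Ex.
  destruct (proj1 (Ndef_defect l x) Nx) as [_ Tx].
  destruct (adjoint_sum2 g h mu Dg Nh) as [_ Et]. rewrite <- Ex, Tx in Et.
  assert (Ea := f_equal (fun v => hinner v y) Et). simpl in Ea. inner_expand_in Ea.
  rewrite (Ny g Dg) in Ea. inner_expand_in Ea.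
  subst x. inner_expand. inner_expand_in Ea.
  apply Ceq_parts in Ea. simpl in Ea. unfold Csub. C_ext; nra.
Qed.

Definition defect_sum_const : Prop :=
  forall l mu, 0 < Im l -> 0 < Im mu -> forall x, Ndef l x ->
  exists g h, D g /\ Ndef mu h /\ x = hadd g h.

Lemma phillips_defect_sum_const : phillips D Ds Ts -> defect_sum_const.
Proof.
  intros [K [Gm [Gp [Th [_ [Hch Hconst]]]]]] l mu Hl Hmu x Nx.
  destruct (Hch l Hl) as [_ Hl'], (Hch mu Hmu) as [_ Hm'].
  destruct (proj1 (Hl' x)) as [Dx Ex].
  { exists h0, x. split; [apply (subspace0 _ _ HD)|]. split; [apply Ndef_defect; auto|].
    rewrite haddC, hadd0. reflexivity. }
  rewrite (Hconst l mu Hl Hmu) in Ex.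
  destruct (proj2 (Hm' x) (conj Dx Ex)) as [g [h [Dg [Nh Eh]]]].
  exists g, h. split; auto. split; auto. apply Ndef_defect; auto.
Qed.

Section DefectSumConst.
Hypothesis Hconst : defect_sum_const.

Lemma defect_orth_of_ne_conj l n x y : 0 < Im l -> Im n < 0 -> l <> Cconj n ->
  Ndef l x -> Ndef n y -> hinner x y = C0.
Proof.
  intros Hl Hn Hne Nx Ny.
  destruct (Hconst l (Cconj n) Hl ltac:(simpl; lra) x Nx) as [g [h [Dg [Nh Ex]]]].
  apply (Cmul_eq0 (Csub l (Cconj n))).
  - intro Z. apply Hne. apply Ceq_parts in Z. simpl in Z. C_ext; lra.
  - rewrite (defect_inner_shift l n (Cconj n) x y g h Nx Ny Dg Nh Ex). unfold Csub. C_ext; ring.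
Qed.

Lemma domain_part_bound l t x g h : D g -> Ndef l x -> Ndef (Cadd l (mkC 0 t)) h ->
  x = hadd g h -> Im l * Im l * hnorm2 g <= t * t * hnorm2 (hsub x g).
Proof.
  intros Dg Nx Nh Ex.
  destruct (proj1 (Ndef_defect l x) Nx) as [_ Tx].
  destruct (adjoint_sum2 g h _ Dg Nh) as [_ Et]. rewrite <- Ex, Tx in Et.
  (* (S - l) g = (S^* - l)(x - h) = - i t h  and  h = x - g *)
  assert (Ev : hsub (T g) (hscal l g) = hscal (mkC 0 (- t)) (hsub x g)).
  { apply hinner_inj_r. intro q. assert (Eq := f_equal (hinner q) Et). inner_expand_in Eq.
    subst x. inner_expand. inner_expand_in Eq. apply Ceq_parts in Eq. simpl in Eq. C_ext; lra. }
  pose proof (shift_lower_bound g l Dg) as L. rewrite Ev, hnorm2_scal in L. simpl in L. nra.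
Qed.

Lemma defect_orth_conj l x y : 0 < Im l -> Ndef l x -> Ndef (Cconj l) y -> hinner x y = C0.
Proof.
  intros Hl Nx Ny.
  set (s := Im l). set (b := hnorm x). set (c := hnorm y).
  assert (Hb : 0 <= b) by apply hnorm_ge0. assert (Hc : 0 <= c) by apply hnorm_ge0.
  apply (C_le_eps_eq0 _ (2 * b * c / s)).
  { apply Rmult_le_pos; [nra|]. apply Rlt_le, Rinv_0_lt_compat. unfold s; lra. }
  intros e He.
  set (t := Rmin e (s / 2)).
  assert (Ht1 : 0 < t) by (apply Rmin_glb_lt; unfold s in *; lra).
  assert (Ht2 : t <= e) by apply Rmin_l.
  assert (Ht3 : t <= s / 2) by apply Rmin_r.
  (* decompose x along N_(l + i t); the N part is orthogonal to y and the D(S) part g is small *)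
  destruct (Hconst l (Cadd l (mkC 0 t)) Hl ltac:(simpl; unfold s in *; lra) x Nx)
    as [g [h [Dg [Nh Ex]]]].
  assert (Hhy : hinner h y = C0).
  { apply (defect_orth_of_ne_conj (Cadd l (mkC 0 t)) (Cconj l)); auto; simpl; try lra.
    intro Z. apply Ceq_parts in Z. simpl in Z. lra. }
  assert (Exy : hinner x y = hinner g y) by (rewrite Ex; inner_expand; rewrite Hhy; C_ext; ring).
  pose proof (domain_part_bound l t x g h Dg Nx Nh Ex) as L. fold s in L.
  pose proof (hnorm2_sub_le _ x g) as Tr. rewrite <- hnorm_sqr in L. fold b in Tr.
  set (a := hnorm g) in *. assert (Ha : 0 <= a) by apply hnorm_ge0.
  assert (Hs : 0 < s) by (unfold s; lra).
  assert (Q : s * a <= t * (b + a)).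
  { apply Rsqr_incr_0_var; [unfold Rsqr; nra | nra]. }
  assert (Qa : a * s <= 2 * t * b) by nra.
  assert (Bd : a * c <= 2 * b * c / s * e).
  { apply (Rmult_le_reg_r s); [exact Hs|]. unfold Rdiv.
    replace (2 * b * c * / s * e * s) with (2 * b * c * e) by (field; lra).
    assert (a * s * c <= 2 * t * b * c) by (apply Rmult_le_compat_r; lra).
    assert (t * (b * c) <= e * (b * c)) by (apply Rmult_le_compat_r; nra).
    nra. }
  rewrite Exy. split; (eapply Rle_trans; [apply Re_hinner_le || apply Im_hinner_le | exact Bd]).
Qed.

Lemma defect_orth_of_sum_const l n x y : 0 < Im l -> Im n < 0 ->
  Ndef l x -> Ndef n y -> hinner x y = C0.
Proof.
  intros Hl Hn Nx Ny. destruct (classic (l = Cconj n)) as [->|Hne].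
  - rewrite <- (Cconj_involutive n) in Ny. apply (defect_orth_conj _ _ _ Hl Nx Ny).
  - exact (defect_orth_of_ne_conj l n x y Hl Hn Hne Nx Ny).
Qed.

End DefectSumConst.

Lemma defect_sum_const_of_orth :
  (forall l n, 0 < Im l -> Im n < 0 -> forall x y, Ndef l x -> Ndef n y -> hinner x y = C0) ->
  defect_sum_const.
Proof.
  intros Horth l mu Hl Hmu x Nx.
  destruct (proj1 (Ndef_defect l x) Nx) as [Dx _].
  destruct (von_neumann_decomposition mu x Hmu Dx) as [g [a [b [Dg [Na [Nb Ex]]]]]].
  assert (b = h0) as ->.
  { apply (defect_component_eq0 l mu x g a b); auto; [lra|].
    apply (Horth l (Cconj mu)); auto. simpl. lra. }
  exists g, a. rewrite hadd0 in Ex. auto.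
Qed.

Lemma Cconj_Ci : Cconj Ci = Copp Ci.
Proof. C_ext; lra. Qed.

(* Components of f = f_0 + f_+ + f_- in D(S) + N_i + N_-i. Off D(S^* ) they are
   meaningless, but still chosen in N_i and N_-i. *)
Definition vn_spec f (t : H * H * H) : Prop :=
  Ndef Ci (snd (fst t)) /\ Ndef (Copp Ci) (snd t) /\
  (Ds f -> D (fst (fst t)) /\ f = hadd (hadd (fst (fst t)) (snd (fst t))) (snd t)).

Lemma vn_spec_exists f : exists t, vn_spec f t.
Proof.
  pose proof (subspace0 _ _ (Ndef_subspace Ci)). pose proof (subspace0 _ _ (Ndef_subspace (Copp Ci))).
  destruct (classic (Ds f)) as [Df|nDf].
  - destruct (von_neumann_decomposition Ci f ltac:(simpl; lra) Df)
      as [g [p [m [Dg [Np [Nm E]]]]]].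
    rewrite Cconj_Ci in Nm. exists (g, p, m). repeat split; auto.
  - exists (h0, h0, h0). repeat split; auto; contradiction.
Qed.

Definition vn f : H * H * H := epsilon (inhabits (h0, h0, h0)) (vn_spec f).
Definition vn_plus f : H := snd (fst (vn f)).
Definition vn_minus f : H := snd (vn f).

Lemma vn_correct f : vn_spec f (vn f).
Proof. unfold vn. apply epsilon_spec, vn_spec_exists. Qed.

Lemma vn_plus_defect f : Ndef Ci (vn_plus f).
Proof. apply vn_correct. Qed.

Lemma vn_minus_defect f : Ndef (Copp Ci) (vn_minus f).
Proof. apply vn_correct. Qed.

Lemma vn_components f g p m : D g -> Ndef Ci p -> Ndef (Copp Ci) m ->
  f = hadd (hadd g p) m -> vn_plus f = p /\ vn_minus f = m.
Proof.
  intros Dg Np Nm Ef.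
  assert (Df : Ds f) by (rewrite Ef; apply (adjoint_sum g p m _ _ Dg Np Nm)).
  destruct (vn_correct f) as [Np' [Nm' Hf]]. destruct (Hf Df) as [Dg' Ef'].
  rewrite <- Cconj_Ci in Nm, Nm'.
  apply (von_neumann_unique Ci _ _ _ g p m ltac:(simpl; lra) Dg' Dg Np' Np Nm' Nm).
  rewrite <- Ef'. exact Ef.
Qed.

Lemma vn_linear a b x y : Ds x -> Ds y ->
  vn_plus (hadd (hscal a x) (hscal b y)) = hadd (hscal a (vn_plus x)) (hscal b (vn_plus y)) /\
  vn_minus (hadd (hscal a x) (hscal b y)) = hadd (hscal a (vn_minus x)) (hscal b (vn_minus y)).
Proof.
  intros Dx Dy.
  destruct (proj2 (proj2 (vn_correct x)) Dx) as [D0x Ex].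
  destruct (proj2 (proj2 (vn_correct y)) Dy) as [D0y Ey].
  pose proof (Ndef_subspace Ci) as [_ [Padd Pscal]].
  pose proof (Ndef_subspace (Copp Ci)) as [_ [Madd Mscal]].
  apply (vn_components _ (hadd (hscal a (fst (fst (vn x)))) (hscal b (fst (fst (vn y)))))).
  - apply (subspace_add _ _ HD); apply (subspace_scal _ _ HD); auto.
  - apply Padd; apply Pscal; apply vn_plus_defect.
  - apply Madd; apply Mscal; apply vn_minus_defect.
  - rewrite Ex at 1. rewrite Ey at 1. unfold vn_plus, vn_minus. vec_ring.
Qed.

Definition boundary_space : Hilbert :=
  subspace_hilbert H (Ndef (Copp Ci)) (Ndef_subspace _) (Ndef_closed _).

Definition Csqrt2 : C := mkC (sqrt 2) 0.

Lemma hinner_sqrt2 x y : hinner (hscal Csqrt2 x) (hscal Csqrt2 y) = Cmul (mkC 2 0) (hinner x y).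
Proof.
  inner_expand. unfold Csqrt2. pose proof (sqrt_sqrt 2 ltac:(lra)) as S2.
  C_ext; rewrite <- ?Rmult_assoc; ring_simplify; rewrite ?S2; try ring;
    replace (sqrt 2 ^ 2) with 2 by (simpl; rewrite Rmult_1_r, S2; reflexivity); ring.
Qed.

Lemma hscal_sqrt2K x : hscal Csqrt2 (hscal (mkC (/ sqrt 2) 0) x) = x.
Proof.
  assert (Hs2 : 0 < sqrt 2) by (apply sqrt_lt_R0; lra).
  rewrite hscalA. rewrite <- (hscal1 _ x) at 2. f_equal. unfold Csqrt2. C_ext; field; lra.
Qed.

Section Triplet.
Variable U : H -> H.
Hypothesis U_maps : forall x, Ndef Ci x -> Ndef (Copp Ci) (U x).
Hypothesis U_onto : forall y, Ndef (Copp Ci) y -> exists x, Ndef Ci x /\ U x = y.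
Hypothesis U_linear : linear_on (Ndef Ci) U.
Hypothesis U_isometric : forall x y, Ndef Ci x -> Ndef Ci y -> hinner (U x) (U y) = hinner x y.

Definition gamma_minus f : boundary_space :=
  exist _ (hscal Csqrt2 (vn_minus f))
    (subspace_scal _ _ (Ndef_subspace _) _ _ (vn_minus_defect f)).
Definition gamma_plus f : boundary_space :=
  exist _ (hscal Csqrt2 (U (vn_plus f)))
    (subspace_scal _ _ (Ndef_subspace _) _ _ (U_maps _ (vn_plus_defect f))).

Lemma gamma_boundary_triplet : boundary_triplet Ds Ts boundary_space gamma_minus gamma_plus.
Proof.
  split; [|split; [|split]].
  - intros a b x y Dx Dy. apply sig_eqP. simpl.
    rewrite (proj2 (vn_linear a b x y Dx Dy)). vec_ring.
  - intros a b x y Dx Dy. apply sig_eqP. simpl.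
    rewrite (proj1 (vn_linear a b x y Dx Dy)), U_linear by apply vn_plus_defect. vec_ring.
  - intros f g Df Dg.
    destruct (proj2 (proj2 (vn_correct f)) Df) as [D0f Ef].
    destruct (proj2 (proj2 (vn_correct g)) Dg) as [D0g Eg].
    rewrite Ef at 1 2. rewrite Eg at 1 2.
    rewrite green_formula by (auto; apply vn_plus_defect || apply vn_minus_defect).
    simpl. unfold sub_inner. simpl.
    rewrite !hinner_sqrt2, U_isometric by apply vn_plus_defect.
    unfold vn_plus, vn_minus, Csub. C_ext; ring.
  - intros [a Na] [b Nb].
    destruct (U_onto _ (subspace_scal _ _ (Ndef_subspace _) (mkC (/ sqrt 2) 0) _ Nb))
      as [x [Nx Ux]].
    set (a' := hscal (mkC (/ sqrt 2) 0) a).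
    assert (Na' : Ndef (Copp Ci) a') by (apply (subspace_scal _ _ (Ndef_subspace _)); auto).
    pose proof (subspace0 _ _ HD) as D0.
    destruct (vn_components (hadd (hadd h0 x) a') h0 x a' D0 Nx Na' eq_refl) as [Ep Em].
    exists (hadd (hadd h0 x) a'). split; [apply (adjoint_sum h0 x a' _ _ D0 Nx Na')|split].
    + apply sig_eqP. simpl. rewrite Em. apply hscal_sqrt2K.
    + apply sig_eqP. simpl. rewrite Ep, Ux. apply hscal_sqrt2K.
Qed.

(* Theta = 0: for every l in C_+, D(S) + N_l = D(S) + N_i = ker gamma_minus. *)
Lemma gamma_char_function : defect_sum_const ->
  char_function D Ds Ts boundary_space gamma_minus gamma_plus (fun _ _ => h0).
Proof.
  intros Hconst l Hl. split.
  - split.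
    + intros a b x y _ _. apply sig_eqP. simpl. rewrite !hscal_h0, hadd0. reflexivity.
    + exists 0. intro x. unfold hnorm. simpl. unfold sub_inner. simpl.
      rewrite hinner0l. simpl. rewrite sqrt_0. lra.
  - intro f. pose proof (subspace0 _ _ (Ndef_subspace (Copp Ci))) as M0. split.
    + intros [g [h [Dg [Nh ->]]]]. apply Ndef_defect in Nh.
      destruct (Hconst l Ci Hl ltac:(simpl; lra) h Nh) as [g' [p [Dg' [Np ->]]]].
      assert (Dgg : D (hadd g g')) by (apply (subspace_add _ _ HD); auto).
      assert (Ef : hadd g (hadd g' p) = hadd (hadd (hadd g g') p) h0) by vec_ring.
      split.
      * rewrite Ef. apply (adjoint_sum _ _ _ _ _ Dgg Np M0).
      * apply sig_eqP. simpl. rewrite (proj2 (vn_components _ _ _ _ Dgg Np M0 Ef)).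
        symmetry. apply hscal_h0.
    + intros [Df Ez]. apply (f_equal (@proj1_sig _ _)) in Ez. simpl in Ez.
      assert (Zm : vn_minus f = h0).
      { apply hinner_eq0. pose proof (hinner_sqrt2 (vn_minus f) (vn_minus f)) as E2.
        rewrite <- Ez, hinner0l in E2. apply Ceq_parts in E2. simpl in E2. C_ext; lra. }
      destruct (proj2 (proj2 (vn_correct f)) Df) as [D0f Ef].
      destruct (Hconst Ci l ltac:(simpl; lra) Hl _ (vn_plus_defect f)) as [g [h [Dg [Nh Ep]]]].
      exists (hadd (fst (fst (vn f))) g), h.
      split; [apply (subspace_add _ _ HD); auto|]. split; [apply Ndef_defect; auto|].
      rewrite Ef at 1. fold (vn_plus f) (vn_minus f). rewrite Zm, Ep. vec_ring.
Qed.


Lemma phillips_of_defect_sum_const : defect_sum_const -> phillips D Ds Ts.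
Proof.
  intro Hconst. exists boundary_space, gamma_minus, gamma_plus, (fun _ _ => h0).
  split; [apply gamma_boundary_triplet | split; [apply gamma_char_function; auto | reflexivity]].
Qed.

End Triplet.

Lemma phillips_iff_defect_orth : equal_nonzero_defect Ds Ts ->
  (phillips D Ds Ts <->
   forall l n, 0 < Im l -> Im n < 0 ->
     forall x y, defect Ds Ts l x -> defect Ds Ts n y -> hinner x y = C0).
Proof.
  intros [[U [U_maps [U_onto [U_linear U_isometric]]]] _]. split.
  - intros Hph l n Hl Hn x y Nx Ny.
    apply (defect_orth_of_sum_const (phillips_defect_sum_const Hph) l n x y Hl Hn);
      apply Ndef_defect; auto.
  - intro Horth. apply (phillips_of_defect_sum_const U).
    + intros x Nx. apply Ndef_defect, U_maps, Ndef_defect, Nx.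
    + intros y Ny. destruct (U_onto y (proj1 (Ndef_defect _ _) Ny)) as [x [Nx Ux]].
      exists x. split; [apply Ndef_defect|]; auto.
    + intros a b x y Nx Ny. apply U_linear; apply Ndef_defect; auto.
    + intros x y Nx Ny. apply U_isometric; apply Ndef_defect; auto.
    + apply defect_sum_const_of_orth. intros l n Hl Hn x y Nx Ny.
      apply (Horth l n Hl Hn); apply Ndef_defect; auto.
Qed.

End Operator.

Theorem theorem3p4 (H : Hilbert) (D : H -> Prop) (T : H -> H)
  (Ds : H -> Prop) (Ts : H -> H) :
  separable H ->
  subspace D -> linear_on D T ->
  densely_defined D -> closed_op D T -> symmetric D T ->
  is_adjoint D T Ds Ts ->
  equal_nonzero_defect Ds Ts ->
  (phillips D Ds Ts <->
   forall l n, 0 < Im l -> Im n < 0 ->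
     forall x y, defect Ds Ts l x -> defect Ds Ts n y -> hinner x y = C0).
Proof.
  intros _ HD HT Hdense Hclosed Hsym Hadj.
  exact (phillips_iff_defect_orth H D T Ds Ts HD HT Hdense Hclosed Hsym Hadj).
Qed.
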